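(* Assume $\Delta^2=0$, a constant per-stage budget $\Lambda(t)=\Lambda$, $\pi_0<1$ with $\pi_0\ge(1-\pi_0)/|G|$, and the uniformity hypothesis (U). Define $\bar c(1)=\sigma^2/\sigma_0^2$, $e(\pi_0,G)=\sqrt{|G|\pi_0/(1-\pi_0)}-1$, $c_{\mathrm{crit}}=\Lambda/(|\Psi(1)|\,e(\pi_0,G))$, and recursively $$\bar c(t+1)=\begin{cases}\dfrac{\pi_0^{3/2}+|G|^{-1/2}(1-\pi_0)^{3/2}}{\sqrt{\pi_0}+\sqrt{|G|(1-\pi_0)}}\left((1+|G|)\bar c(t)+\dfrac{\Lambda}{|\Psi(1)|}\right), & \bar c(t)<c_{\mathrm{crit}},\\[2mm] \bar c(t)+\dfrac{\pi_0\Lambda}{|\Psi(1)|}, & \bar c(t)\ge c_{\mathrm{crit}}.\end{cases}$$ Then under the semi-omniscient policy, for all $t\ge1$ and all $i\in H(\Psi(t-1))$, $\mathbb E[c_i(t)\mid |\Psi(1)|]\le\bar c(t)$.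
   Context: Model. There are $Q$ cells. At time $1$ each cell independently contains a target with probability $p_0\in(0,1)$; $\Psi(t)$ is the set of target locations at time $t$, the number of targets $|\Psi(1)|\sim\mathrm{Binomial}(Q,p_0)$ is constant in time, and at most one target occupies a cell. Each cell $j$ has a set $G(j)$ of neighbours with $|G(j)|=|G|$ for all $j$; $H(j)=\{j\}\cup G(j)$, and for a set $S$ of cells $G(S)=\bigcup_{j\in S}G(j)$, $H(S)=S\cup G(S)$; neighbourhoods of distinct targets are disjoint so that $|H(\Psi(t))|=(1+|G|)|\Psi(1)|$. Between stages each target independently stays in its cell with probability $\pi_0$ and otherwise moves to a uniformly chosen neighbour. Amplitudes: initial $\mathcal N(\mu_0,\sigma_0^2)$, random walk with $\mathcal N(0,\Delta^2)$ increments. At stage $t$ efforts $\lambda_i(t)\ge0$, $\sum_i\lambda_i(t)\le\Lambda(t)$, give observations $y_i(t)=\sqrt{\lambda_i(t)}I_i(t)\theta_i(t)+n_i(t)$, $n_i(t)$ i.i.d. $\mathcal N(0,\sigma^2)$. Posterior precisions $c_i(t)$ ($=\sigma^2/$posterior variance) start at $c_i(1)=\sigma^2/\sigma_0^2$ and evolve by: for each target $n$ at $s^{(n)}(t)$ and each $i\in H(s^{(n)}(t))$, $1/c_i(t+1)=1/(c_{s^{(n)}(t)}(t)+\lambda_{s^{(n)}(t)}(t))+\Delta^2/\sigma^2$ (so for $\Delta^2=0$, $c_i(t+1)=c_{s^{(n)}(t)}(t)+\lambda_{s^{(n)}(t)}(t)$). Semi-omniscient policy: at stage $t$ it knows $\Psi(t-1)$,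 so $p_i(t)=\pi_0$ for $i\in\Psi(t-1)$, $p_i(t)=(1-\pi_0)/|G|$ for $i\in G(\Psi(t-1))$, $p_i(t)=0$ otherwise; it allocates $\lambda^s(t)$ minimizing $\sum_i p_i(t)/(c_i(t)+\lambda_i)$ over $\lambda\ge0$ with $\sum_i\lambda_i=\Lambda(t)$. Hypothesis (U): for every $t>1$ the posterior precisions used to compute the allocation are uniform on $H(\Psi(t-1))$ and equal to the bounding sequence, $c_i(t)=\bar c(t)$ for $i\in H(\Psi(t-1))$ (used to determine which cells receive nonzero effort). *)

(* reals as an arbitrary real closed field R (only algebra,
   order and square roots are needed; all probabilities are finite sums). *)
From HB Require Import structures.
From mathcomp Require Import all_boot all_order all_algebra.
Set Implicit Arguments. Unset Strict Implicit. Unset Printing Implicit Defensive.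
Import Order.TTheory GRing.Theory Num.Theory.
Local Open Scope ring_scope.

Definition Hn (T : finType) (G : T -> {set T}) (j : T) : {set T} := j |: G j.

Definition eG (R : rcfType) (g : nat) (pi0 : R) : R :=
  Num.sqrt (g%:R * pi0 / (1 - pi0)) - 1.

Definition ccrit (R : rcfType) (g N : nat) (pi0 Lam : R) : R :=
  Lam / (N%:R * eG g pi0).

Definition cbar_step (R : rcfType) (g N : nat) (pi0 Lam : R) (c : R) : R :=
  if c < ccrit g N pi0 Lam then
    (pi0 * Num.sqrt pi0 + (1 - pi0) * Num.sqrt (1 - pi0) / Num.sqrt g%:R)
      / (Num.sqrt pi0 + Num.sqrt (g%:R * (1 - pi0)))
      * ((1 + g%:R) * c + Lam / N%:R)
  else c + pi0 * Lam / N%:R.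

(* bounding sequence: cbar 1 = sigma^2/sigma0^2, cbar (t+1) = cbar_step (cbar t);
   cbar 0 is an irrelevant junk value. *)
Fixpoint cbar (R : rcfType) (g N : nat) (pi0 Lam sig2 sig02 : R) (t : nat) : R :=
  match t with
  | 0 | 1 => sig2 / sig02
  | t'.+1 => cbar_step g N pi0 Lam (cbar g N pi0 Lam sig2 sig02 t')
  end.

Definition move (R : rcfType) (T : finType) (G : T -> {set T}) (g : nat)
  (pi0 : R) (x y : T) : R :=
  if y == x then pi0 else if y \in G x then (1 - pi0) / g%:R else 0.

(* a history of length k: positions of the N targets at times 1..k *)
Definition Hist (T : finType) (N k : nat) := {ffun 'I_k -> {ffun 'I_N -> T}}.

(* Psi(j) for j = 0..k, Psi(0) = s0 the given initial configuration *)
Definition psi (T : finType) (N k : nat) (s0 : {ffun 'I_N -> T})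
  (h : Hist T N k) (j : nat) : {ffun 'I_N -> T} :=
  if j is j'.+1 then
    match (insub j' : option 'I_k) with Some o => h o | None => s0 end
  else s0.

Definition hprob (R : rcfType) (T : finType) (G : T -> {set T}) (g N k : nat)
  (pi0 : R) (s0 : {ffun 'I_N -> T}) (h : Hist T N k) : R :=
  \prod_(j < k) \prod_(n < N)
     move G g pi0 (psi s0 h j n) (psi s0 h j.+1 n).

(* semi-omniscient location probabilities p_i(t) given Psi(t-1) = P *)
Definition pprob (R : rcfType) (T : finType) (G : T -> {set T}) (g N : nat)
  (pi0 : R) (P : {ffun 'I_N -> T}) (i : T) : R :=
  if [exists n, P n == i] then pi0
  else if [exists n, i \in G (P n)] then (1 - pi0) / g%:R else 0.

Definition obj (R : rcfType) (T : finType) (G : T -> {set T}) (g N : nat)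
  (pi0 : R) (P : {ffun 'I_N -> T}) (c : T -> R) (lam : T -> R) : R :=
  \sum_i pprob G g pi0 P i / (c i + lam i).

Definition is_opt_alloc (R : rcfType) (T : finType) (G : T -> {set T})
  (g N : nat) (pi0 Lam : R) (P : {ffun 'I_N -> T}) (c : T -> R)
  (lam : T -> R) : Prop :=
  [/\ forall i, 0 <= lam i, \sum_i lam i = Lam &
      forall lam' : T -> R, (forall i, 0 <= lam' i) -> \sum_i lam' i = Lam ->
        obj G g pi0 P c lam <= obj G g pi0 P c lam'].

(* posterior precisions c_i(t) along a history h (t <= k+1);
   stage t' uses positions Psi(t') and the allocation pol t' (Psi(t'-1));
   for i in H(s^(n)(t')):  1/c_i(t'+1) = 1/(c_s(t') + lambda_s(t')) + Delta^2/sigma^2 ;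
   other cells keep their precision. *)
Fixpoint prec (R : rcfType) (T : finType) (G : T -> {set T}) (N k : nat)
  (sig2 sig02 Delta2 : R) (s0 : {ffun 'I_N -> T})
  (pol : nat -> {ffun 'I_N -> T} -> T -> R) (h : Hist T N k) (t : nat) : T -> R :=
  match t with
  | 0 | 1 => fun _ => sig2 / sig02
  | t'.+1 => fun i =>
      let S := psi s0 h t' in
      match [pick n | i \in Hn G (S n)] with
      | Some n =>
          ((prec G sig2 sig02 Delta2 s0 pol h t' (S n)
              + pol t' (psi s0 h t'.-1) (S n))^-1 + Delta2 / sig2)^-1
      | None => prec G sig2 sig02 Delta2 s0 pol h t' i
      end
  end.

From HB Require Import structures.
From mathcomp Require Import all_boot all_order all_algebra.
From mathcomp Require Import ring lra.
Set Implicit Arguments. Unset Strict Implicit. Unset Printing Implicit Defensive.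
Import Order.TTheory GRing.Theory Num.Theory.
Local Open Scope ring_scope.

(* With Delta^2 = 0 every cell of H(s(t)) receives c_{s(t)}(t) + lambda_{s(t)}(t),
   and precisions stay constant on each neighbourhood H(s).  Hence, conditioning on
   Psi(t-1), the expected precision grows from stage t to t+1 by the expected effort
   collected at the new position of the target, sum_y P(s -> y) lambda_y.  Under (U)
   the allocation problem has uniform precision cbar(t); its objective is strictly
   convex on the support of p, so the optimum there is the unique KKT point, given by
   water-filling: below c_crit the target cell and its neighbours both receive effort,
   above c_crit only the previous target cell does.  In both cases the expected
   collected effort is exactly cbar(t+1) - cbar(t), and induction on t concludes. *)

Section Histories.
Variables (T : finType) (N : nat).

Definition hist_ext k (h : Hist T N k) (z : {ffun 'I_N -> T}) : Hist T N k.+1 :=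
  [ffun i : 'I_k.+1 =>
     match (insub (val i) : option 'I_k) with Some j => h j | None => z end].

Lemma psi_hist_ext k s0 (h : Hist T N k) z j :
  (j <= k)%N -> psi s0 (hist_ext h z) j = psi s0 h j.
Proof.
case: j => [|j] // j_le; rewrite /psi.
case: insubP => [o _ o_val|]; last by rewrite ltnS ltnW.
case: insubP => [o' _ o'_val|]; last by rewrite j_le.
rewrite ffunE; case: insubP => [o'' _ o''_val|]; last by rewrite o_val j_le.
by congr (h _); apply: val_inj; rewrite /= o''_val o_val o'_val.
Qed.

Lemma psi_hist_ext_last k s0 (h : Hist T N k) z : psi s0 (hist_ext h z) k.+1 = z.
Proof.
rewrite /psi; case: insubP => [o _ o_val|]; last by rewrite ltnSn.
rewrite ffunE; case: insubP => [o' _ o'_val|] //.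
by move: (ltn_ord o'); rewrite o'_val o_val ltnn.
Qed.

Lemma sum_hist_ext (V : nmodType) k (F : Hist T N k.+1 -> V) :
  \sum_(h : Hist T N k.+1) F h = \sum_(h : Hist T N k) \sum_z F (hist_ext h z).
Proof.
rewrite pair_big /=.
apply: (reindex (fun p : Hist T N k * {ffun 'I_N -> T} => hist_ext p.1 p.2)).
exists (fun h : Hist T N k.+1 =>
  ([ffun j : 'I_k => h (widen_ord (leqnSn k) j)] : Hist T N k, h ord_max)).
  move=> [h z] _ /=; congr pair.
    apply/ffunP => j; rewrite !ffunE.
    case: insubP => [o _ o_val|]; last by rewrite /= ltn_ord.
    by congr (h _); apply: val_inj.
  rewrite ffunE; case: insubP => [o _ o_val|] //.
  by move: (ltn_ord o); rewrite o_val /= ltnn.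
move=> h _; apply/ffunP => i; rewrite !ffunE; case: insubP => [o _ o_val|].
  by rewrite ffunE; congr (h _); apply: val_inj.
rewrite -ltnNge ltnS => k_le; congr (h _); apply: val_inj => /=.
by apply/eqP; rewrite eqn_leq k_le -ltnS ltn_ord.
Qed.

Lemma hprob_hist_ext (R : rcfType) (G : T -> {set T}) g (pi0 : R) k s0
    (h : Hist T N k) z :
  hprob G g pi0 s0 (hist_ext h z) =
  hprob G g pi0 s0 h * \prod_(n < N) move G g pi0 (psi s0 h k n) (z n).
Proof.
rewrite /hprob big_ord_recr; congr (_ * _).
  apply: eq_bigr => j _.
  by rewrite (psi_hist_ext _ _ _ (ltnW (ltn_ord j))) (psi_hist_ext _ _ _ (ltn_ord j)).
by rewrite (psi_hist_ext _ _ _ (leqnn k)) psi_hist_ext_last.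
Qed.

End Histories.

Section Kernel.
Variables (R : rcfType) (T : finType) (G : T -> {set T}) (g : nat) (pi0 : R).
Hypotheses (g_gt0 : (0 < g)%N) (card_G : forall j, #|G j| = g).
Hypothesis G_irrefl : forall j, j \notin G j.

Lemma move_neq0_Hn x y : move G g pi0 x y != 0 -> y \in Hn G x.
Proof.
rewrite /move /Hn in_setU1; case: (y =P x) => [->|_]; rewrite ?eqxx //=.
by case: (y \in G x) => //; rewrite eqxx.
Qed.

Lemma sum_move_mul x (F : T -> R) :
  \sum_y move G g pi0 x y * F y =
  pi0 * F x + (1 - pi0) / g%:R * \sum_(y in G x) F y.
Proof.
rewrite (bigID (mem (Hn G x))) /= [X in _ + X]big1 ?addr0; last first.
  move=> y; rewrite /Hn in_setU1 negb_or => /andP[/negbTE y_neq /negbTE y_nG].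
  by rewrite /move y_neq y_nG mul0r.
rewrite big_setU1 ?G_irrefl //= /move eqxx mulr_sumr; congr (_ + _).
apply: eq_bigr => y y_in; case: eqP => [y_eq|_]; last by rewrite y_in.
by move: (G_irrefl x); rewrite -{1}y_eq y_in.
Qed.

Lemma sum_move x : \sum_y move G g pi0 x y = 1.
Proof.
have := sum_move_mul x (fun _ => 1); under eq_bigr do rewrite mulr1.
move=> ->; rewrite sumr_const card_G mulr1 -mulr_natr mulfVK ?subrKC //.
by rewrite mul1r pnatr_eq0 -lt0n.
Qed.

Lemma sum_prod_move_coord N (P : {ffun 'I_N -> T}) (n : 'I_N) (F : T -> R) :
  \sum_(z : {ffun 'I_N -> T}) (\prod_(m < N) move G g pi0 (P m) (z m)) * F (z n) =
  \sum_y move G g pi0 (P n) y * F y.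
Proof.
pose F' m y := move G g pi0 (P m) y * (if m == n then F y else 1).
have F'E (z : {ffun 'I_N -> T}) :
    (\prod_(m < N) move G g pi0 (P m) (z m)) * F (z n) = \prod_(m < N) F' m (z m).
  rewrite /F' big_split /=; congr (_ * _).
  by rewrite (bigD1 n) //= eqxx big1 ?mulr1 // => m /negbTE ->.
under eq_bigr do rewrite F'E.
rewrite -(bigA_distr_bigA F') (bigD1 n) //= [X in _ * X]big1 ?mulr1.
  by apply: eq_bigr => y _; rewrite /F' eqxx.
move=> m /negbTE m_neq; rewrite /F' m_neq.
under eq_bigr do rewrite mulr1.
exact: sum_move.
Qed.

Lemma sum_prod_move N (P : {ffun 'I_N -> T}) :
  \sum_(z : {ffun 'I_N -> T}) \prod_(m < N) move G g pi0 (P m) (z m) = 1.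
Proof.
rewrite -(bigA_distr_bigA (fun m y => move G g pi0 (P m) y)) big1 // => m _.
exact: sum_move.
Qed.

Lemma sum_hprob N s0 k : \sum_(h : Hist T N k) hprob G g pi0 s0 h = 1.
Proof.
elim: k => [|k IH].
  rewrite (eq_bigr (fun _ => 1)); last by move=> h _; rewrite /hprob big_ord0.
  by rewrite sumr_const card_ffun card_ord expn0.
rewrite sum_hist_ext -[RHS]IH; apply: eq_bigr => h _.
under eq_bigr do rewrite hprob_hist_ext.
by rewrite -mulr_sumr sum_prod_move mulr1.
Qed.

End Kernel.

Definition nbhds_disjoint (T : finType) (G : T -> {set T}) N (P : {ffun 'I_N -> T}) :=
  forall m m' : 'I_N, m != m' -> [disjoint Hn G (P m) & Hn G (P m')].

Definition occupied (T : finType) N (P : {ffun 'I_N -> T}) (i : T) :=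
  [exists m, P m == i].

Definition adjacent (T : finType) (G : T -> {set T}) N (P : {ffun 'I_N -> T}) (i : T) :=
  [exists m, i \in G (P m)].

Definition two_level (R : nmodType) (T : finType) (G : T -> {set T}) N
    (P : {ffun 'I_N -> T}) (vt vn : R) (i : T) : R :=
  if occupied P i then vt else if adjacent G P i then vn else 0.

Lemma pprob_two_level (R : rcfType) (T : finType) (G : T -> {set T}) g N (pi0 : R)
    (P : {ffun 'I_N -> T}) :
  pprob G g pi0 P =1 two_level G P pi0 ((1 - pi0) / g%:R).
Proof. by []. Qed.

Lemma Hn_self (T : finType) (G : T -> {set T}) x : x \in Hn G x.
Proof. by rewrite /Hn setU11. Qed.

Section Configurations.
Variables (T : finType) (G : T -> {set T}) (N : nat) (P : {ffun 'I_N -> T}).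
Hypothesis disjP : nbhds_disjoint G P.
Hypothesis G_irrefl : forall j, j \notin G j.

Lemma Hn_index_uniq m m' i : i \in Hn G (P m) -> i \in Hn G (P m') -> m = m'.
Proof.
move=> i_m i_m'; case: (eqVneq m m') => // m_neq.
by move: (disjointFr (disjP m_neq) i_m); rewrite i_m'.
Qed.

Lemma pick_Hn n i : i \in Hn G (P n) -> [pick m | i \in Hn G (P m)] = Some n.
Proof.
move=> i_n; case: pickP => [m i_m|no_m]; last by move: (no_m n); rewrite i_n.
by rewrite (Hn_index_uniq i_m i_n).
Qed.

Lemma two_level_occupied (R : nmodType) (vt vn : R) m : two_level G P vt vn (P m) = vt.
Proof. by rewrite /two_level ifT //; apply/existsP; exists m. Qed.

Lemma two_level_nbr (R : nmodType) (vt vn : R) m i :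
  i \in G (P m) -> two_level G P vt vn i = vn.
Proof.
move=> i_nbr; rewrite /two_level ifF; last first.
  apply/negbTE/existsP => -[m' /eqP P_m'].
  have m'_eq : m' = m.
    by apply: (@Hn_index_uniq _ _ i); rewrite /Hn ?P_m' in_setU1 ?eqxx ?i_nbr ?orbT.
  by move: (G_irrefl (P m)); rewrite -{1}m'_eq P_m' i_nbr.
by rewrite ifT //; apply/existsP; exists m.
Qed.

Lemma sum_two_level (R : pzSemiRingType) g (vt vn : R) :
  (forall j, #|G j| = g) -> \sum_i two_level G P vt vn i = N%:R * (vt + g%:R * vn).
Proof.
move=> card_G.
have split_cells i : two_level G P vt vn i =
    \sum_(m < N) (if i \in Hn G (P m) then two_level G P vt vn i else 0).
  case: (boolP [exists m, i \in Hn G (P m)]) => [/existsP[m0 i_m0]|no_m].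
    rewrite (bigD1 m0) //= i_m0 big1 ?addr0 // => m m_neq.
    by case: ifP => // i_m; move: m_neq; rewrite (Hn_index_uniq i_m i_m0) eqxx.
  rewrite big1; last by move=> m _; case: ifP => // i_m; case/negP: no_m; apply/existsP; exists m.
  rewrite /two_level; case: ifP => [/existsP[m /eqP P_m]|_].
    by case/negP: no_m; apply/existsP; exists m; rewrite -P_m Hn_self.
  case: ifP => // /existsP[m i_m]; case/negP: no_m; apply/existsP; exists m.
  by rewrite /Hn in_setU1 i_m orbT.
under eq_bigr do rewrite split_cells.
rewrite exchange_big /= (eq_bigr (fun _ => vt + g%:R * vn)).
  by rewrite sumr_const card_ord [RHS]mulr_natl.
move=> m _; rewrite -big_mkcond /= /Hn big_setU1 ?G_irrefl //= two_level_occupied.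
rewrite (eq_bigr (fun _ => vn)); last by move=> i; apply: two_level_nbr.
by rewrite sumr_const card_G mulr_natl.
Qed.

End Configurations.

(* KKT condition of one cell of [min sum_i p_i / (c + l_i)] with multiplier nu. *)
Definition kkt_cell (R : numFieldType) (p c v nu : R) : Prop :=
  [/\ 0 <= v, p / (c + v) ^+ 2 <= nu & (v != 0 -> p / (c + v) ^+ 2 = nu)].

Lemma kkt_opt_unique (R : realFieldType) (T : finType) (p ls l : T -> R) (c nu Lam : R) :
  0 < c -> (forall i, 0 <= p i) -> (forall i, kkt_cell (p i) c (ls i) nu) ->
  (forall i, 0 <= l i) -> \sum_i ls i = Lam -> \sum_i l i = Lam ->
  \sum_i p i / (c + l i) <= \sum_i p i / (c + ls i) ->
  forall i, 0 < p i -> l i = ls i.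
Proof.
move=> c_gt0 p_ge0 kkt l_ge0 sum_ls sum_l l_opt.
have ls_ge0 i : 0 <= ls i by case: (kkt i).
have cls_gt0 i : 0 < c + ls i by apply: ltr_wpDr.
have cl_gt0 i : 0 < c + l i by apply: ltr_wpDr.
pose Q i := p i * (l i - ls i) ^+ 2 / ((c + l i) * (c + ls i) ^+ 2).
have Q_ge0 i : 0 <= Q i.
  apply: divr_ge0; first by apply: mulr_ge0 => //; apply: sqr_ge0.
  by apply: mulr_ge0; [apply: ltW | apply: sqr_ge0].
(* the convexity gap of p/(c+x) at ls, bounded using the KKT condition *)
have Q_le i : Q i <= (p i / (c + l i) - p i / (c + ls i)) + nu * (l i - ls i).
  have -> : Q i = (p i / (c + l i) - p i / (c + ls i))
                  + p i / (c + ls i) ^+ 2 * (l i - ls i).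
    by rewrite /Q; field; rewrite !gt_eqF.
  rewrite lerD2l; case: (kkt i) => _ marg_le marg_eq.
  have [ls_eq0|ls_neq0] := eqVneq (ls i) 0; last by rewrite marg_eq.
  by rewrite ls_eq0 subr0; apply: ler_wpM2r => //; rewrite -ls_eq0.
have sum_Q : \sum_i Q i = 0.
  apply/eqP; rewrite eq_le sumr_ge0 // andbT.
  apply: le_trans (ler_sum _ (fun i _ => Q_le i)) _.
  by rewrite big_split /= sumrB -mulr_sumr sumrB sum_ls sum_l subrr mulr0 addr0 subr_le0.
move=> i p_gt0; have /eqP : Q i = 0 := psumr_eq0P (fun j _ => Q_ge0 j) sum_Q isT.
rewrite /Q !mulf_eq0 invr_eq0 !mulf_eq0 subr_eq0 orbb (gt_eqF p_gt0).
by rewrite (gt_eqF (cl_gt0 i)) (gt_eqF (cls_gt0 i)) /= ?orbF => /eqP.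
Qed.

Definition two_level_kkt (R : numFieldType) (g N : nat) (pi0 Lam c vt vn nu : R) :=
  [/\ 0 <= nu, N%:R * (vt + g%:R * vn) = Lam, kkt_cell pi0 c vt nu
    & kkt_cell ((1 - pi0) / g%:R) c vn nu].

(* c + vt = sp * mu and c + vn = r / s * mu equalise the marginal gains at mu^-2;
   the budget constraint fixes mu. *)
Lemma waterfill_spread (R : realFieldType) (g N : nat) (pi0 Lam c sp r s : R) :
  (0 < N)%N -> 0 < sp -> 0 < r -> 0 < s -> 0 < c -> 0 <= Lam ->
  sp ^+ 2 = pi0 -> r ^+ 2 = 1 - pi0 -> s ^+ 2 = g%:R ->
  r <= s * sp -> c * (s * sp - r) <= r * (Lam / N%:R) ->
  exists vt vn nu, two_level_kkt g N pi0 Lam c vt vn nu /\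
    pi0 * vt + (1 - pi0) * vn =
    (pi0 * sp + (1 - pi0) * r / s) / (sp + s * r) * ((1 + g%:R) * c + Lam / N%:R) - c.
Proof.
move=> N_gt0 sp_gt0 r_gt0 s_gt0 c_gt0 Lam_ge0 sp2 r2 s2 r_le c_le.
have NR_gt0 : 0 < N%:R :> R by rewrite ltr0n.
set L := Lam / N%:R in c_le *.
have L_ge0 : 0 <= L by apply: divr_ge0 => //; apply: ltW.
have den_gt0 : 0 < sp + s * r by apply: addr_gt0 => //; apply: mulr_gt0.
have g_ge0 : 0 <= g%:R :> R by apply: ler0n.
pose mu := ((1 + g%:R) * c + L) / (sp + s * r).
have mu_gt0 : 0 < mu by apply: divr_gt0 => //; apply: ltr_wpDr => //; apply: mulr_gt0; lra.
have vn_ge0 : 0 <= r / s * mu - c.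
  have -> : r / s * mu - c = (r * L - c * (s * sp - r)) / (s * (sp + s * r)).
    by rewrite /mu -s2; field; rewrite !gt_eqF.
  by apply: divr_ge0; [rewrite subr_ge0 | apply: ltW; apply: mulr_gt0].
have vt_ge0 : 0 <= sp * mu - c.
  apply: le_trans vn_ge0 _; rewrite lerD2r ler_wpM2r ?(ltW mu_gt0) //.
  by rewrite ler_pdivrMr // mulrC.
have marg_t : pi0 / (c + (sp * mu - c)) ^+ 2 = (mu ^+ 2)^-1.
  by rewrite -sp2 addrC subrK; field; rewrite !gt_eqF.
have marg_n : (1 - pi0) / g%:R / (c + (r / s * mu - c)) ^+ 2 = (mu ^+ 2)^-1.
  by rewrite -r2 -s2 addrC subrK; field; rewrite !gt_eqF.
exists (sp * mu - c), (r / s * mu - c), (mu ^+ 2)^-1; split; first split.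
- by rewrite invr_ge0 exprn_ge0 // ltW.
- by rewrite /mu /L -s2; field; rewrite !gt_eqF.
- by split; rewrite ?marg_t.
- by split; rewrite ?marg_n.
- by rewrite /mu; field; rewrite !gt_eqF.
Qed.

Lemma waterfill_target_only (R : realFieldType) (g N : nat) (pi0 Lam c sp r s : R) :
  (0 < N)%N -> 0 < sp -> 0 < r -> 0 < s -> 0 < c -> 0 <= Lam ->
  sp ^+ 2 = pi0 -> r ^+ 2 = 1 - pi0 -> s ^+ 2 = g%:R ->
  r * (Lam / N%:R) <= c * (s * sp - r) ->
  two_level_kkt g N pi0 Lam c (Lam / N%:R) 0 (pi0 / (c + Lam / N%:R) ^+ 2).
Proof.
move=> N_gt0 sp_gt0 r_gt0 s_gt0 c_gt0 Lam_ge0 sp2 r2 s2 c_ge.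
have NR_gt0 : 0 < N%:R :> R by rewrite ltr0n.
set L := Lam / N%:R in c_ge *.
have L_ge0 : 0 <= L by apply: divr_ge0 => //; apply: ltW.
have cL_gt0 : 0 < c + L by lra.
split.
- by apply: divr_ge0; [rewrite -sp2 sqr_ge0 | apply: exprn_ge0; apply: ltW].
- by rewrite mulr0 addr0 /L mulrC divfK ?gt_eqF.
- by split.
split; rewrite ?eqxx // addr0 -r2 -sp2 -s2.
have sq_le : (r * (c + L)) ^+ 2 <= (s * sp * c) ^+ 2.
  rewrite ler_sqr ?nnegrE; first lra.
    by apply: mulr_ge0; lra.
  by apply: mulr_ge0; [apply: mulr_ge0|]; lra.
rewrite -subr_le0.
have -> : r ^+ 2 / s ^+ 2 / c ^+ 2 - sp ^+ 2 / (c + L) ^+ 2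
    = ((r * (c + L)) ^+ 2 - (s * sp * c) ^+ 2) / (s ^+ 2 * c ^+ 2 * (c + L) ^+ 2).
  by field; rewrite !gt_eqF.
apply: mulr_le0_ge0; first by rewrite subr_le0.
by rewrite invr_ge0; apply: mulr_ge0; [apply: mulr_ge0|]; apply: exprn_ge0; lra.
Qed.

(* At e(pi0, G) = 0 both allocations coincide. *)
Lemma waterfill_balanced (R : realFieldType) (g : nat) (pi0 c L sp r s : R) :
  0 < sp -> 0 < s -> sp ^+ 2 = pi0 -> r ^+ 2 = 1 - pi0 -> s ^+ 2 = g%:R -> r = s * sp ->
  (pi0 * sp + (1 - pi0) * r / s) / (sp + s * r) * ((1 + g%:R) * c + L) - c = pi0 * L.
Proof.
move=> sp_gt0 s_gt0 sp2 r2 s2 r_eq.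
have g1_gt0 : 0 < 1 + s ^+ 2 by apply: ltr_wpDr; rewrite ?sqr_ge0.
have pi0_eq : pi0 = (1 + s ^+ 2)^-1.
  apply: (mulIf (lt0r_neq0 g1_gt0)); rewrite mulVf ?lt0r_neq0 //.
  rewrite mulrDr mulr1 -(subrK pi0 1) -r2 r_eq -sp2; ring.
rewrite r_eq pi0_eq -s2; field.
by rewrite !lt0r_neq0 // ?addr_gt0 ?mulr_gt0.
Qed.

Section OptimalAllocation.
Variables (R : rcfType) (T : finType) (G : T -> {set T}) (g N : nat).
Variables (pi0 Lam c : R) (P : {ffun 'I_N -> T}) (lam : T -> R) (n : 'I_N).
Hypotheses (disjP : nbhds_disjoint G P) (G_irrefl : forall j, j \notin G j).
Hypotheses (card_G : forall j, #|G j| = g) (g_gt0 : (0 < g)%N).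
Hypotheses (pi0_gt0 : 0 < pi0) (pi0_lt1 : pi0 < 1) (c_gt0 : 0 < c).
Hypothesis opt : is_opt_alloc G g pi0 Lam P (fun _ => c) lam.

Lemma opt_alloc_two_level vt vn nu : two_level_kkt g N pi0 Lam c vt vn nu ->
  forall m, lam (P m) = vt /\ forall y, y \in G (P m) -> lam y = vn.
Proof.
case: opt => lam_ge0 sum_lam lam_min [nu_ge0 budget kkt_t kkt_n].
have q_gt0 : 0 < (1 - pi0) / g%:R by apply: divr_gt0; rewrite ?subr_gt0 ?ltr0n.
have p_ge0 i : 0 <= pprob G g pi0 P i.
  by rewrite pprob_two_level /two_level; do 2?case: ifP => _ //; apply: ltW.
have ls_ge0 i : 0 <= two_level G P vt vn i.
  by case: kkt_t kkt_n => ? _ _ [? _ _]; rewrite /two_level; do 2?case: ifP.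
have kkt i : kkt_cell (pprob G g pi0 P i) c (two_level G P vt vn i) nu.
  rewrite pprob_two_level /two_level; do 2?case: ifP => _ //.
  by split; rewrite ?mul0r ?eqxx.
have sum_ls : \sum_i two_level G P vt vn i = Lam by rewrite (sum_two_level _ _ _ _ card_G).
have lam_eq := kkt_opt_unique c_gt0 p_ge0 kkt lam_ge0 sum_ls sum_lam (lam_min _ ls_ge0 sum_ls).
move=> m; split => [|y y_nbr].
  by rewrite lam_eq ?two_level_occupied // pprob_two_level two_level_occupied.
rewrite lam_eq; first exact: two_level_nbr y_nbr.
by rewrite pprob_two_level (two_level_nbr _ _ _ _ y_nbr).
Qed.

Lemma expected_effort_two_level vt vn nu : two_level_kkt g N pi0 Lam c vt vn nu ->
  \sum_y move G g pi0 (P n) y * lam y = pi0 * vt + (1 - pi0) * vn.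
Proof.
move=> kkt; have [lam_t lam_n] := opt_alloc_two_level kkt n.
rewrite sum_move_mul // lam_t (eq_bigr (fun _ => vn)) // sumr_const card_G.
by rewrite -[vn *+ g]mulr_natl mulrA divfK // pnatr_eq0 -lt0n.
Qed.

Hypotheses (pi0_dominant : (1 - pi0) / g%:R <= pi0) (Lam_ge0 : 0 <= Lam).

Lemma expected_effort_opt :
  \sum_y move G g pi0 (P n) y * lam y = cbar_step g N pi0 Lam c - c.
Proof.
have N_gt0 : (0 < N)%N := leq_ltn_trans (leq0n _) (ltn_ord n).
have gR_gt0 : 0 < g%:R :> R by rewrite ltr0n.
set sp := Num.sqrt pi0; set r := Num.sqrt (1 - pi0); set s := Num.sqrt (g%:R : R).
have sp_gt0 : 0 < sp by rewrite sqrtr_gt0.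
have r_gt0 : 0 < r by rewrite sqrtr_gt0 subr_gt0.
have s_gt0 : 0 < s by rewrite sqrtr_gt0.
have sp2 : sp ^+ 2 = pi0 by rewrite sqr_sqrtr // ltW.
have r2 : r ^+ 2 = 1 - pi0 by rewrite sqr_sqrtr // subr_ge0 ltW.
have s2 : s ^+ 2 = g%:R by rewrite sqr_sqrtr // ltW.
have r_le : r <= s * sp.
  have : r ^+ 2 <= (s * sp) ^+ 2 by rewrite exprMn r2 sp2 s2 -ler_pdivrMl // mulrC.
  by rewrite ler_sqr ?nnegrE // ltW // mulr_gt0.
have e_def : r * eG g pi0 = s * sp - r.
  rewrite /eG sqrtrM ?mulr_ge0 ?ler0n ?ltW // sqrtrM ?ler0n // sqrtrV ?subr_ge0 ?ltW //.
  by rewrite -/sp -/r -/s; field; rewrite gt_eqF.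
have spread : c * (s * sp - r) <= r * (Lam / N%:R) ->
    \sum_y move G g pi0 (P n) y * lam y =
    (pi0 * sp + (1 - pi0) * r / s) / (sp + s * r) * ((1 + g%:R) * c + Lam / N%:R) - c.
  move=> c_le; have [vt [vn [nu [kkt <-]]]] := waterfill_spread N_gt0 sp_gt0 r_gt0 s_gt0
    c_gt0 Lam_ge0 sp2 r2 s2 r_le c_le.
  exact: expected_effort_two_level kkt.
rewrite /cbar_step /ccrit sqrtrM ?ler0n // -/sp -/r -/s.
have [e0|e_neq0] := eqVneq (eG g pi0) 0.
  (* c_crit = Lam / 0 = 0, so the second branch is taken *)
  rewrite e0 mulr0 invr0 mulr0 (lt_gtF c_gt0).
  have r_eq : r = s * sp by apply/eqP; rewrite eq_sym -subr_eq0 -e_def e0 mulr0 eqxx.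
  rewrite spread; last by rewrite -r_eq subrr mulr0 mulr_ge0 ?divr_ge0 ?ler0n // ltW.
  by rewrite (waterfill_balanced _ _ sp_gt0 s_gt0 sp2 r2 s2 r_eq); ring.
have e_gt0 : 0 < eG g pi0.
  by rewrite lt0r e_neq0 -(pmulr_rge0 _ r_gt0) e_def subr_ge0.
rewrite invfM mulrA ltr_pdivlMr //; case: ifPn => [c_lt|]; last rewrite -leNgt => c_ge.
  by rewrite spread // -e_def (mulrCA c) ler_pM2l // ltW.
rewrite (expected_effort_two_level (waterfill_target_only N_gt0 sp_gt0 r_gt0 s_gt0 c_gt0
  Lam_ge0 sp2 r2 s2 _)); last by rewrite -e_def (mulrCA c) ler_pM2l.
by rewrite mulr0 addr0 mulrA addrC addKr.
Qed.

End OptimalAllocation.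

Section Precisions.
Variables (R : rcfType) (T : finType) (G : T -> {set T}) (N : nat).
Variables (sig2 sig02 D : R) (s0 : {ffun 'I_N -> T}).
Variable pol : nat -> {ffun 'I_N -> T} -> T -> R.

Lemma precS k (h : Hist T N k) t i : (0 < t)%N ->
  prec G sig2 sig02 D s0 pol h t.+1 i =
  match [pick n | i \in Hn G (psi s0 h t n)] with
  | Some n =>
     ((prec G sig2 sig02 D s0 pol h t (psi s0 h t n)
        + pol t (psi s0 h t.-1) (psi s0 h t n))^-1 + D / sig2)^-1
  | None => prec G sig2 sig02 D s0 pol h t i
  end.
Proof. by case: t. Qed.

Lemma prec_eq_prefix k1 k2 (h1 : Hist T N k1) (h2 : Hist T N k2) t :
  (forall j, (j < t)%N -> psi s0 h1 j = psi s0 h2 j) ->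
  prec G sig2 sig02 D s0 pol h1 t =1 prec G sig2 sig02 D s0 pol h2 t.
Proof.
elim: t => [|[|t] IH] psi_eq i //.
have psi_eq' j : (j < t.+1)%N -> psi s0 h1 j = psi s0 h2 j.
  by move=> j_lt; apply: psi_eq; apply: ltnW.
rewrite precS // [RHS]precS // (psi_eq t.+1) // (psi_eq t) ?(ltnW (ltnSn _)) //.
by case: pickP => [n _|_]; rewrite !IH.
Qed.

Lemma prec_Hn_const k (h : Hist T N k) n y :
  nbhds_disjoint G (psi s0 h k) -> y \in Hn G (psi s0 h k n) ->
  prec G sig2 sig02 D s0 pol h k.+1 y = prec G sig2 sig02 D s0 pol h k.+1 (psi s0 h k n).
Proof.
case: k h => [|k] h disj y_in //.
by rewrite precS // [RHS]precS // (pick_Hn disj y_in) (pick_Hn disj (Hn_self _ _)).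
Qed.

End Precisions.

Section SemiOmniscient.
Variables (R : rcfType) (T : finType) (G : T -> {set T}) (g N : nat).
Variables (pi0 Lam sig2 sig02 : R) (s0 : {ffun 'I_N -> T}).
Variable pol : nat -> {ffun 'I_N -> T} -> T -> R.
Hypotheses (g_gt0 : (0 < g)%N) (card_G : forall j, #|G j| = g).
Hypothesis G_irrefl : forall j, j \notin G j.
Hypotheses (pi0_lt1 : pi0 < 1) (pi0_dominant : (1 - pi0) / g%:R <= pi0).
Hypotheses (Lam_ge0 : 0 <= Lam) (sig2_gt0 : 0 < sig2) (sig02_gt0 : 0 < sig02).
Hypothesis disjoint_hist : forall k (h : Hist T N k) j, (j <= k)%N ->
  hprob G g pi0 s0 h != 0 -> nbhds_disjoint G (psi s0 h j).
Hypothesis opt_pol : forall t P, (1 <= t)%N ->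
  is_opt_alloc G g pi0 Lam P (fun _ => cbar g N pi0 Lam sig2 sig02 t) (pol t P).

Local Notation cb := (cbar g N pi0 Lam sig2 sig02).
Local Notation prec0 := (prec G sig2 sig02 0 s0 pol).

Lemma pi0_gt0 : 0 < pi0.
Proof. by apply: lt_le_trans pi0_dominant; apply: divr_gt0; rewrite ?subr_gt0 ?ltr0n. Qed.

Lemma cbar_gt0 t : 0 < cb t.+1.
Proof.
elim: t => [|t IH]; first exact: divr_gt0.
have sp_gt0 : 0 < Num.sqrt pi0 by rewrite sqrtr_gt0 pi0_gt0.
have LN_ge0 : 0 <= Lam / N%:R by apply: divr_ge0.
have q_ge0 : 0 <= 1 - pi0 by rewrite subr_ge0 ltW.
rewrite [cb t.+2]/= /cbar_step; case: ifP => _.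
  apply: mulr_gt0; first apply: divr_gt0.
  - by apply: ltr_wpDr; [apply: divr_ge0; rewrite ?mulr_ge0 ?sqrtr_ge0 | apply: mulr_gt0 pi0_gt0 _].
  - by apply: ltr_wpDr; rewrite ?sqrtr_ge0.
  - by apply: ltr_wpDr => //; apply: mulr_gt0 IH; apply: ltr_wpDr; rewrite ?ler0n.
by apply: ltr_wpDr => //; rewrite -mulrA mulr_ge0 // ltW // pi0_gt0.
Qed.

Lemma prec_hist_ext k (h : Hist T N k) z n y :
  hprob G g pi0 s0 (hist_ext h z) != 0 -> y \in Hn G (z n) ->
  prec0 (hist_ext h z) k.+2 y = prec0 h k.+1 (psi s0 h k n) + pol k.+1 (psi s0 h k) (z n).
Proof.
move=> hz_neq0 y_in; move: (hz_neq0); rewrite hprob_hist_ext mulf_eq0 negb_or.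
case/andP=> h_neq0; rewrite prodf_seq_neq0 => /allP /(_ n (mem_index_enum n)) move_neq0.
have disj_z : nbhds_disjoint G z.
  by have := disjoint_hist (leqnn k.+1) hz_neq0; rewrite psi_hist_ext_last.
rewrite precS // psi_hist_ext_last (pick_Hn disj_z y_in) psi_hist_ext //.
rewrite mul0r addr0 invrK.
rewrite (@prec_eq_prefix R T G N sig2 sig02 0 s0 pol _ _ (hist_ext h z) h k.+1) => [|j j_lt].
  by congr (_ + _); apply: prec_Hn_const (move_neq0_Hn move_neq0); apply: disjoint_hist h_neq0.
exact: psi_hist_ext.
Qed.

Lemma expected_prec_step k n (sel : Hist T N k.+1 -> T) :
  (forall h, sel h \in Hn G (psi s0 h k.+1 n)) ->
  \sum_(h : Hist T N k.+1) hprob G g pi0 s0 h * prec0 h k.+2 (sel h) =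
  \sum_(h : Hist T N k)
     hprob G g pi0 s0 h * (prec0 h k.+1 (psi s0 h k n) + (cb k.+2 - cb k.+1)).
Proof.
move=> sel_in; rewrite sum_hist_ext; apply: eq_bigr => h _.
have [h0|h_neq0] := eqVneq (hprob G g pi0 s0 h) 0.
  by rewrite h0 mul0r big1 // => z _; rewrite hprob_hist_ext h0 !mul0r.
rewrite (eq_bigr (fun z : {ffun 'I_N -> T} => hprob G g pi0 s0 h *
    ((\prod_(m < N) move G g pi0 (psi s0 h k m) (z m)) *
     (prec0 h k.+1 (psi s0 h k n) + pol k.+1 (psi s0 h k) (z n))))); last first.
  move=> z _; rewrite mulrA -hprob_hist_ext.
  have [->|hz_neq0] := eqVneq (hprob G g pi0 s0 (hist_ext h z)) 0; first by rewrite !mul0r.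
  have := sel_in (hist_ext h z); rewrite psi_hist_ext_last => sel_z.
  by rewrite (prec_hist_ext hz_neq0 sel_z).
rewrite -mulr_sumr; congr (_ * _); under eq_bigr do rewrite mulrDr.
rewrite big_split /= -mulr_suml sum_prod_move // mul1r sum_prod_move_coord //.
congr (_ + _); apply: expected_effort_opt => //.
- exact: disjoint_hist (leqnn k) h_neq0.
- exact: pi0_gt0.
- exact: cbar_gt0.
- exact: opt_pol.
Qed.

Lemma expected_prec_le_cbar k n (sel : Hist T N k -> T) :
  (forall h, sel h \in Hn G (psi s0 h k n)) ->
  \sum_(h : Hist T N k) hprob G g pi0 s0 h * prec0 h k.+1 (sel h) <= cb k.+1.
Proof.
elim: k sel => [|k IH] sel sel_in.
  rewrite (eq_bigr (fun _ => cb 1)); last by move=> h _; rewrite /hprob big_ord0 mul1r.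
  by rewrite sumr_const card_ffun card_ord expn0.
rewrite (expected_prec_step sel_in); under eq_bigr do rewrite mulrDr.
rewrite big_split -mulr_suml sum_hprob // mul1r.
apply: le_trans (lerD (IH _ (fun h => Hn_self G (psi s0 h k n))) (lexx _)) _.
by rewrite addrC subrK.
Qed.

End SemiOmniscient.

Unset Implicit Arguments.

Theorem lemma1 (R : rcfType) (T : finType) (G : T -> {set T}) (g N : nat)
  (pi0 Lam sig2 sig02 Delta2 : R) (s0 : {ffun 'I_N -> T})
  (pol : nat -> {ffun 'I_N -> T} -> T -> R) :
  (0 < g)%N ->
  (forall j : T, #|G j| = g) ->
  (forall j : T, j \notin G j) ->
  0 <= pi0 -> pi0 < 1 -> (1 - pi0) / g%:R <= pi0 ->
  0 <= Lam -> 0 < sig2 -> 0 < sig02 ->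
  Delta2 = 0 ->
  (forall (k : nat) (h : Hist T N k) (j : nat), (j <= k)%N ->
     hprob G g pi0 s0 h != 0 ->
     forall n m : 'I_N, n != m ->
       [disjoint Hn G (psi s0 h j n) & Hn G (psi s0 h j m)]) ->
  (forall (t : nat) (P : {ffun 'I_N -> T}), (1 <= t)%N ->
     is_opt_alloc G g pi0 Lam P (fun _ => cbar g N pi0 Lam sig2 sig02 t) (pol t P)) ->
  forall t : nat, (1 <= t)%N ->
  forall (n : 'I_N) (sel : Hist T N t.-1 -> T),
    (forall h, sel h \in Hn G (psi s0 h t.-1 n)) ->
    \sum_(h : Hist T N t.-1)
        hprob G g pi0 s0 h * prec G sig2 sig02 Delta2 s0 pol h t (sel h)
      <= cbar g N pi0 Lam sig2 sig02 t.
Proof.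
move=> g_gt0 card_G G_irrefl _ pi0_lt1 pi0_dom Lam_ge0 sig2_gt0 sig02_gt0 -> disj opt.
case=> [//|k] _ n sel sel_in.
exact: (expected_prec_le_cbar g_gt0 card_G G_irrefl pi0_lt1 pi0_dom Lam_ge0
          sig2_gt0 sig02_gt0 disj opt sel_in).
Qed.
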